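(* Let $n = 8k+5$ with $k \ge 0$ an integer, and let $M = \frac{3n-1}{2}$. Then every transposition $(2i-1,2i+1)\in S_M$ with $1 \le 2i-1$ and $2i+1 \le M$ can be obtained from $(1,3)$ by successive conjugation by $n$-crossing permutations over $S_M$; that is, it equals $g(1,3)g^{-1}$ for some $g$ that is a product of $n$-crossing permutations over $S_M$.
   Context: For integers $2\le n\le m$ and $1 \le j \le m-n+1$, the $n$-crossing permutation $\pi_j\in S_m$ is $\pi_j=(j,\,j+n-1)(j+1,\,j+n-2)\cdots$, i.e. the involution sending $i \mapsto 2j+n-1-i$ for $j\le i\le j+n-1$ and fixing all other elements of $\{1,\dots,m\}$. The $n$-crossing permutations over $S_m$ are $\pi_1,\dots,\pi_{m-n+1}$. *)

From mathcomp Require Import all_boot all_order all_fingroup.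
Set Implicit Arguments. Unset Strict Implicit. Unset Printing Implicit Defensive.

(* Points of {1,...,M} are represented by the ordinals of 'I_M via i |-> i-1. *)

(* tpermv M a b : the transposition (a, b) in S_M, with a, b given as
   1-based points of {1,...,M} (callers ensure 1 <= a, b <= M). *)
Definition tpermv (M a b : nat) : {perm 'I_M} :=
  match M as M0 return {perm 'I_M0} with
  | 0 => 1%g
  | m.+1 => tperm (inord a.-1 : 'I_m.+1) (inord b.-1)
  end.

(* The n-crossing permutation pi_j in S_M:
   pi_j = (j, j+n-1)(j+1, j+n-2)..., i.e. the product of the disjoint
   transpositions (j+t, j+n-1-t) for 0 <= t < floor(n/2);
   it sends i |-> 2j+n-1-i for j <= i <= j+n-1 and fixes the rest. *)
Definition crossing (n M j : nat) : {perm 'I_M} :=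
  (\prod_(t < n./2) tpermv M (j + t) (j + n - 1 - t))%g.

From mathcomp Require Import all_boot all_order all_fingroup zify.

(* Conjugating (a, b) by pi_j gives (pi_j a, pi_j b), and pi_1 sends 1, 3 to
   n, n-2.  If 2i-1 <= n, then pi_i sends n, n-2 on to 2i-1, 2i+1.  Otherwise
   pi_(n-i) sends them to 2n-2i-1, 2n-2i+1, and pi_(4k+3), the reflection
   x |-> 2n-x of the last n points, sends these to 2i+1, 2i-1. *)

Definition swap_point (b c a : nat) : nat :=
  if a == b then c else if a == c then b else a.

Definition cross_point (n j a : nat) : nat :=
  if j <= a <= j + n - 1 then 2 * j + n - 1 - a else a.

Definition crossings_point (n : nat) (s : seq nat) (a : nat) : nat :=
  foldl (fun x j => cross_point n j x) a s.

Lemma cross_point_in n j a :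
  j <= a <= j + n - 1 -> cross_point n j a = 2 * j + n - 1 - a.
Proof. by rewrite /cross_point => ->. Qed.

Lemma cross_point_range n M j a : 1 <= j -> j + n - 1 <= M -> 1 <= a <= M ->
  1 <= cross_point n j a <= M.
Proof. by rewrite /cross_point; case: ifP; lia. Qed.

Lemma inord_eq m a b :
  a <= m -> b <= m -> (inord a == inord b :> 'I_m.+1) = (a == b).
Proof. by move=> am bm; rewrite -val_eqE /= !inordK. Qed.

Lemma tpermvC M a b : tpermv M a b = tpermv M b a.
Proof. by case: M => // m; exact: tpermC. Qed.

Lemma tpermv_inord m b c a :
  1 <= a <= m.+1 -> 1 <= b <= m.+1 -> 1 <= c <= m.+1 ->
  tpermv m.+1 b c (inord a.-1) = inord (swap_point b c a).-1.
Proof.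
move=> ha hb hc; have pred_eq x y : 0 < x -> 0 < y -> (x.-1 == y.-1) = (x == y).
  by move=> *; apply/eqP/eqP; lia.
rewrite /tpermv permE /= /swap_point !inord_eq ?pred_eq; try lia.
by case: eqP => // _; case: eqP.
Qed.

Section Crossing.

Variables (n m j : nat).
Hypotheses (j_ge1 : 1 <= j) (window_le : j + n - 1 <= m.+1).

Lemma crossing_partial_inord h a : h.*2 <= n -> 1 <= a <= m.+1 ->
  (\prod_(t < h) tpermv m.+1 (j + t) (j + n - 1 - t))%g (inord a.-1)
  = inord (if (j <= a < j + h) || (j + n - 1 - h < a <= j + n - 1)
           then 2 * j + n - 1 - a else a).-1.
Proof.
move=> + ha; elim: h => [|h IH] hn.
  by rewrite big_ord0 perm1; case: ifP => //; lia.
rewrite big_ord_recr permM /= IH; last by lia.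
rewrite tpermv_inord; try (case: ifP; lia); try lia.
congr (inord _.-1); case: ifP => ?; case: ifP => ?; rewrite /swap_point.
all: by repeat case: eqP => ?; lia.
Qed.

Lemma crossing_inord a : 1 <= a <= m.+1 ->
  crossing n m.+1 j (inord a.-1) = inord (cross_point n j a).-1.
Proof.
move=> ha; rewrite /crossing crossing_partial_inord //; last first.
  by rewrite -{2}(odd_double_half n) leq_addl.
have := odd_double_half n; rewrite /cross_point => E; congr (inord _.-1).
by case: (odd n) E => /= E; case: ifP => ?; case: ifP => ?; lia.
Qed.

End Crossing.

Lemma tpermvJ_crossing n M j a b : 1 <= j -> j + n - 1 <= M ->
  1 <= a <= M -> 1 <= b <= M ->
  (tpermv M a b ^ crossing n M j)%g
  = tpermv M (cross_point n j a) (cross_point n j b).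
Proof.
case: M => [|m] hj hw ha hb; first lia.
by rewrite /tpermv tpermJ -!/(tpermv _ _ _) !crossing_inord.
Qed.

Lemma tpermvJ_crossings n M s a b : n <= M ->
  all (fun j => 1 <= j <= M - n + 1) s -> 1 <= a <= M -> 1 <= b <= M ->
  (tpermv M a b ^ \prod_(j <- s) crossing n M j)%g
  = tpermv M (crossings_point n s a) (crossings_point n s b).
Proof.
move=> nM; elim: s a b => [|j s IH] a b /=; first by rewrite big_nil conjg1.
move=> /andP[hj hs] ha hb; have hw : j + n - 1 <= M by lia.
by rewrite big_cons conjgM tpermvJ_crossing ?IH //; try apply: cross_point_range; lia.
Qed.

Theorem lemma4p5 (k M i : nat) :
  M = (3 * (8 * k + 5) - 1) %/ 2 ->
  1 <= 2 * i - 1 -> 2 * i + 1 <= M ->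
  exists s : seq nat,
    all (fun j => 1 <= j <= M - (8 * k + 5) + 1) s /\
    tpermv M (2 * i - 1) (2 * i + 1)
    = ((tpermv M 1 3) ^ (\prod_(j <- s) crossing (8 * k + 5) M j))%g.
Proof.
set n := 8 * k + 5 => HM hi1 hiM.
have {}HM : M = 12 * k + 7 by rewrite HM; lia.
have pi1_1 : cross_point n 1 1 = n by rewrite cross_point_in; lia.
have pi1_3 : cross_point n 1 3 = n - 2 by rewrite cross_point_in; lia.
have [i_small | i_large] := leqP (2 * i - 1) n.
- exists [:: 1; i]; split; first by rewrite /=; lia.
  rewrite tpermvJ_crossings /crossings_point /= ?pi1_1 ?pi1_3; try lia.
  by rewrite !cross_point_in; try lia; congr tpermv; lia.
- exists [:: 1; n - i; 4 * k + 3]; split; first by rewrite /=; lia.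
  rewrite tpermvJ_crossings /crossings_point /= ?pi1_1 ?pi1_3; try lia.
  rewrite !(@cross_point_in n (n - i)); try lia.
  by rewrite tpermvC !cross_point_in; try lia; congr tpermv; lia.
Qed.
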